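(* Let $G=(I_0\cup I_1,E)$ be a bipartite graph with bipartition $(I_0,I_1)$ such that $d(v)\ge 3$ for every $v\in I_1$, and let $d_1,d_2$ be real numbers with $0<d_1<d_2$. Then $G$ admits a proper $\{-d_1,0,d_2\}$-edge weighting.
   Context: All graphs are simple, finite and undirected; $d(v)$ denotes the degree of $v$. For a graph $G=(V,E)$ and a set $Q\subset\mathbb{R}$, a $Q$-edge weighting is a map $w:E\to Q$. The weighted degree of a vertex $v$ is $d_w(v)=\sum_{e\ni v}w(e)$. An edge $uv$ is a conflict if $d_w(u)=d_w(v)$, and $w$ is proper if it has no conflicts. *)

From mathcomp Require Import all_boot all_order all_algebra.
Set Implicit Arguments. Unset Strict Implicit. Unset Printing Implicit Defensive.
Import Order.TTheory GRing.Theory Num.Theory.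
Local Open Scope ring_scope.

Definition simple_graph (T : finType) (e : rel T) : Prop :=
  symmetric e /\ irreflexive e.

Definition deg (T : finType) (e : rel T) (v : T) : nat := #|[set u | e v u]|.

Definition bipartition (T : finType) (e : rel T) (I0 I1 : {set T}) : Prop :=
  [/\ I0 :&: I1 = set0, I0 :|: I1 = [set: T] &
      forall u v, e u v -> (u \in I0) && (v \in I1) || (u \in I1) && (v \in I0)].

(* An edge weighting is represented by a symmetric function w : T -> T -> R;
   only its values on edges matter.  It is a Q-edge weighting if w u v \in Q
   for every edge uv. *)
Definition edge_weighting (T : finType) (e : rel T) (R : numDomainType)
    (Q : pred R) (w : T -> T -> R) : Prop :=
  (forall u v, w u v = w v u) /\ (forall u v, e u v -> Q (w u v)).

Definition wdeg (T : finType) (e : rel T) (R : numDomainType)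
    (w : T -> T -> R) (v : T) : R := \sum_(u | e v u) w v u.

Definition proper_weighting (T : finType) (e : rel T) (R : numDomainType)
    (w : T -> T -> R) : Prop :=
  forall u v, e u v -> wdeg e w u != wdeg e w v.

From mathcomp Require Import all_boot all_order all_algebra.
From mathcomp Require Import lra zify.
Import Order.TTheory GRing.Theory Num.Theory.

Set Implicit Arguments. Unset Strict Implicit. Unset Printing Implicit Defensive.
Local Open Scope ring_scope.

(* Choose a set H of edges for which d_H(v) is even on I0 and odd on I1 except
   at "defective" vertices.  Minimising the potential
   3 #(defects in I0) + 2 #(defects in I1) puts every defect in I1 and keeps
   any two defects from sharing a neighbour: a defect u in I0 is moved to a
   neighbour by toggling one edge at u, and two defects with a common
   neighbour u both disappear when their edges to u are toggled.
   Weight the edges of H by d2 and the others by 0, then reweight by -d1 two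
   edges at each defective z that are both in H or both outside H (they exist
   as d(z) >= 3).  A vertex with a edges of weight d2 and b of weight -d1 has
   d_w = a d2 - b d1, where b <= 1 on I0 and b = 2 at defects, 0 elsewhere on
   I1.  Across every edge the pairs (b, a mod 2) at the two ends differ, b
   differs by at most 2, and a has the same parity when b differs by 2; as
   0 < d1 < d2 this separates the two weighted degrees. *)

Lemma odd_card_xor1 (T : finType) (A B : {set T}) (y : T) :
  (forall t, (t \in B) = (t \in A) (+) (t == y)) -> odd #|B| = ~~ odd #|A|.
Proof.
move=> memB; have [yA|yA] := boolP (y \in A).
- have -> : B = A :\ y.
    apply/setP => t; rewrite memB !inE.
    by case: (t =P y) => [->|_]; rewrite ?yA ?addbF ?addbT ?andbT.
  by rewrite (cardsD1 y A) yA /= negbK.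
- have yB : y \in B by rewrite memB (negbTE yA) eqxx.
  have -> : A = B :\ y.
    apply/setP => t; rewrite !inE memB.
    by case: (t =P y) => [->|_]; rewrite ?(negbTE yA) ?addbF ?addbT ?andbT.
  by rewrite (cardsD1 y B) yB.
Qed.

Lemma ltn_sum_update2 (T : finType) (f g : T -> nat) (x y : T) :
  x != y -> (forall v, v != x -> v != y -> g v = f v) ->
  (g x + g y < f x + f y)%N -> (\sum_v g v < \sum_v f v)%N.
Proof.
move=> xy gf lt_xy.
have split2 h : (\sum_v h v = h x + h y + \sum_(v | (v != x) && (v != y)) h v)%N.
  by rewrite (bigD1 x) // (bigD1 y) 1?eq_sym //= addnA.
rewrite !split2 (eq_bigr f) => [|v /andP[]]; last exact: gf.
by rewrite ltn_add2r.
Qed.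

Lemma pigeonhole_bool (T : finType) (A : {set T}) (f : T -> bool) :
  (3 <= #|A|)%N -> exists y1 y2, [/\ y1 \in A, y2 \in A, y1 != y2 & f y1 = f y2].
Proof.
move=> A3; have splitA := cardsID [set y | f y] A.
have [|] : (1 < #|A :&: [set y | f y]|)%N \/ (1 < #|A :\: [set y | f y]|)%N by lia.
- case/card_gt1P=> y1 [y2 [+ + y12]].
  rewrite !inE => /andP[y1A fy1] /andP[y2A fy2].
  by exists y1, y2; rewrite fy1 fy2.
- case/card_gt1P=> y1 [y2 [+ + y12]].
  rewrite !inE => /andP[/negbTE fy1 y1A] /andP[/negbTE fy2 y2A].
  by exists y1, y2; rewrite fy1 fy2.
Qed.

Lemma even_card_pair_sep (T : finType) (P : pred T) (y1 y2 : T) :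
  y1 != y2 -> P y1 = P y2 -> ~~ odd #|[set y in [set y1; y2] | P y]|.
Proof.
move=> y12 same; have [Py1|Py1] := boolP (P y1).
  rewrite (_ : [set y in _ | _] = [set y1; y2]) ?cards2 ?y12 //.
  by apply/setP => y; rewrite !inE andb_idr // => /orP[]/eqP->; rewrite -?same.
rewrite (_ : [set y in _ | _] = set0) ?cards0 //.
apply/setP => y; rewrite !inE; apply/negbTE/negP => /andP[/orP[]/eqP-> ].
  exact/negP.
by rewrite -same; apply/negP.
Qed.

Lemma eq_set2 (T : finType) (v t x y : T) : x != y ->
  ([set v; t] == [set x; y]) = ((v == x) && (t == y)) || ((v == y) && (t == x)).
Proof.
move=> xy; apply/eqP/idP => [E|]; last first.
  by case/orP=> /andP[/eqP-> /eqP->] //; apply: setUC.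
have /set2P[ev|ev] : v \in [set x; y] by rewrite -E set21.
- have : y \in [set v; t] by rewrite E set22.
  by rewrite ev !inE eq_sym (negbTE xy) eqxx /= eq_sym => ->.
- have : x \in [set v; t] by rewrite E set21.
  by rewrite ev !inE (negbTE xy) eqxx /= eq_sym => ->; rewrite orbT.
Qed.

Lemma eq_natmul_comb (R : realDomainType) (d1 d2 : R) (a b a' b' : nat) :
  0 < d1 -> d1 < d2 -> (b <= b' <= b.+2)%N ->
  d2 *+ a - d1 *+ b = d2 *+ a' - d1 *+ b' ->
  (a' = a /\ b' = b) \/ (a' = a.+1 /\ b' = b.+2).
Proof.
move=> d1_gt0 d12 /andP[le_bb' le_b'b] E.
have d2_ge0 m : 0 <= d2 *+ m by rewrite mulrn_wge0 // ltW // (lt_trans d1_gt0).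
have [k eb' le_k2] : exists2 k, b' = (b + k)%N & (k <= 2)%N.
  by exists (b' - b)%N; lia.
subst b'; clear le_bb' le_b'b.
have d1k_ge0 : 0 <= d1 *+ k by rewrite mulrn_wge0 // ltW.
have {}E : d2 *+ a' = d2 *+ a + d1 *+ k by move: E; rewrite mulrnDr; lra.
have [le_aa'|lt_a'a] := leqP a a'; last first.
  have [m ea] : exists m, a = (m.+1 + a')%N by exists (a - a'.+1)%N; lia.
  by exfalso; move: E (d2_ge0 m); rewrite ea (mulrnDr d2 m.+1) mulrS; lra.
have [m ea'] : exists m, a' = (m + a)%N by exists (a' - a)%N; rewrite subnK.
subst a'; clear le_aa'; rewrite (mulrnDr d2 m) in E.
have {E d1k_ge0} : d2 *+ m = d1 *+ k by lra.
(* with k <= 2 this forces (m, k) = (0, 0) or (1, 2) *)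
case: k le_k2 => [|[|[|//]]] _; (case: m => [|[|m]]; [| | move: (d2_ge0 m)]);
  rewrite ?mulr0n ?mulrS ?mulr0n => *; try (exfalso; lra).
- by left; split; lia.
- by right; split; lia.
Qed.

Lemma bipartition_edge (T : finType) (e : rel T) (I0 I1 : {set T}) :
  bipartition e I0 I1 -> forall u v, e u v -> (u \in I1) = (v \notin I1).
Proof.
case=> disj cover edge_sides u v /edge_sides.
have I0E x : (x \in I0) = (x \notin I1).
  have := in_setT x; rewrite -cover inE.
  have : x \notin I0 :&: I1 by rewrite disj inE.
  by rewrite inE; case: (x \in I0); case: (x \in I1).
by rewrite !I0E; case: (u \in I1); case: (v \in I1).
Qed.

Section ParityDefects.

Variables (T : finType) (e : rel T) (I1 : {set T}).
Hypotheses (e_sym : symmetric e) (e_irr : irreflexive e).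

Definition hdeg (H : {set {set T}}) (v : T) : nat :=
  #|[set u | e v u && ([set v; u] \in H)]|.

Definition toggle (H : {set {set T}}) (x y : T) : {set {set T}} :=
  [set s | (s \in H) (+) (s == [set x; y])].

Definition defective (H : {set {set T}}) (v : T) : bool :=
  odd (hdeg H v) (+) (v \in I1).

(* The costs 3 and 2 make both repair moves lower the potential. *)
Definition defect_cost (H : {set {set T}}) (v : T) : nat :=
  if defective H v then (if v \in I1 then 2 else 3) else 0.

Definition potential (H : {set {set T}}) : nat := \sum_v defect_cost H v.

Lemma edge_neq x y : e x y -> x != y.
Proof. by apply: contraTneq => ->; rewrite e_irr. Qed.

Lemma toggleC H x y : toggle H x y = toggle H y x.
Proof. by rewrite /toggle setUC. Qed.

Lemma odd_hdeg_toggle_end H x y : e x y ->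
  odd (hdeg (toggle H x y) x) = ~~ odd (hdeg H x).
Proof.
move=> exy; apply: (odd_card_xor1 (y := y)) => t; rewrite !inE.
have [ext|next] /= := boolP (e x t).
  rewrite eq_set2; last exact: edge_neq exy.
  by rewrite eqxx (negbTE (edge_neq exy)) orbF.
by apply/esym/negbTE; apply: contraNneq next => ->.
Qed.

Lemma odd_hdeg_toggle H x y v : e x y ->
  odd (hdeg (toggle H x y) v) = odd (hdeg H v) (+) ((v == x) || (v == y)).
Proof.
move=> exy; have [->|vx] := eqVneq v x.
  by rewrite odd_hdeg_toggle_end // addbT.
have [->|vy] := eqVneq v y.
  by rewrite toggleC odd_hdeg_toggle_end 1?e_sym // addbT.
rewrite addbF /hdeg; congr odd; apply: eq_card => t; rewrite !inE.
rewrite eq_set2; last exact: edge_neq exy.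
by rewrite (negbTE vx) (negbTE vy) addbF.
Qed.

Lemma defective_toggle H x y v : e x y ->
  defective (toggle H x y) v = defective H v (+) ((v == x) || (v == y)).
Proof. by move=> exy; rewrite /defective odd_hdeg_toggle // addbAC. Qed.

Lemma potential_toggle_I0 H u v :
  defective H u -> u \notin I1 -> v \in I1 -> e u v ->
  (potential (toggle H u v) < potential H)%N.
Proof.
move=> du uI0 vI1 euv; apply: (ltn_sum_update2 (edge_neq euv)) => [w wu wv|].
  by rewrite /defect_cost defective_toggle // (negbTE wu) (negbTE wv) addbF.
rewrite /defect_cost !defective_toggle // !eqxx orbT /= du (negbTE uI0) vI1.
by case: (defective H v).
Qed.

Lemma potential_toggle_pair H z z' u :
  z != z' -> defective H z -> defective H z' -> z \in I1 -> z' \in I1 ->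
  e z u -> e z' u -> (potential (toggle (toggle H z u) u z') < potential H)%N.
Proof.
move=> zz' dz dz' zI1 z'I1 ezu ez'u.
have euz' : e u z' by rewrite e_sym.
apply: (ltn_sum_update2 zz') => [w wz wz'|].
  by rewrite /defect_cost !defective_toggle // (negbTE wz) (negbTE wz') orbF addbK.
have [zu z'u] := (edge_neq ezu, edge_neq ez'u).
rewrite /defect_cost !defective_toggle // !eqxx [z' == z]eq_sym.
by rewrite (negbTE zu) (negbTE z'u) (negbTE zz') dz dz' zI1 z'I1.
Qed.

Hypothesis edge_I1 : forall u v, e u v -> (u \in I1) = (v \notin I1).

Lemma exists_sparse_defects : exists H,
  (forall v, defective H v -> v \in I1) /\
  (forall z z' u, defective H z -> defective H z' -> e z u -> e z' u -> z = z').
Proof.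
have [H _ H_min] := @arg_minnP _ set0 xpredT potential isT.
have defective_I1 v : defective H v -> v \in I1.
  move=> dv; apply: contraT => vI0.
  have : (0 < hdeg H v)%N.
    by apply: odd_gt0; move: dv; rewrite /defective (negbTE vI0) addbF.
  case/card_gt0P => u; rewrite inE => /andP[evu _].
  have uI1 : u \in I1 by apply/negPn; rewrite -(edge_I1 evu).
  by have := H_min (toggle H v u) isT; rewrite leqNgt potential_toggle_I0.
exists H; split=> // z z' u dz dz' ezu ez'u; apply/eqP; apply: contraT => zz'.
have := H_min (toggle (toggle H z u) u z') isT.
by rewrite leqNgt potential_toggle_pair ?defective_I1.
Qed.

End ParityDefects.

Section SparseDefectWeighting.

Variables (T : finType) (e : rel T) (I1 : {set T}) (H : {set {set T}}).
Hypothesis e_sym : symmetric e.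
Hypothesis edge_I1 : forall u v, e u v -> (u \in I1) = (v \notin I1).
Hypothesis deg_I1 : forall v, v \in I1 -> (3 <= deg e v)%N.

Local Notation defective := (defective e I1 H).

Hypothesis defective_I1 : forall v, defective v -> v \in I1.
Hypothesis defective_apart :
  forall z z' u, defective z -> defective z' -> e z u -> e z' u -> z = z'.

Definition mono_pair (z : T) : {set T} :=
  if [pick p : T * T | [&& e z p.1, e z p.2, p.1 != p.2 &
                          ([set z; p.1] \in H) == ([set z; p.2] \in H)]]
  is Some p then [set p.1; p.2] else set0.

Definition special (x y : T) : bool :=
  defective x && (y \in mono_pair x) || defective y && (x \in mono_pair y).

Definition nspecial (x : T) : nat := #|[set y | e x y && special x y]|.

Definition nheavy (x : T) : nat :=
  #|[set y | e x y && ~~ special x y && ([set x; y] \in H)]|.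

Lemma mono_pairP z : z \in I1 -> exists y1 y2,
  [/\ mono_pair z = [set y1; y2], e z y1, e z y2, y1 != y2 &
      ([set z; y1] \in H) = ([set z; y2] \in H)].
Proof.
move=> zI1; rewrite /mono_pair.
case: pickP => [[y1 y2] /and4P[/= ? ? ? /eqP ?]|none]; first by exists y1, y2.
have [y1 [y2 [+ + y12 same]]] :=
  pigeonhole_bool (fun y => [set z; y] \in H) (deg_I1 zI1).
rewrite !inE => ey1 ey2.
by have := none (y1, y2); rewrite /= ey1 ey2 y12 same eqxx.
Qed.

Lemma special_I1 v y : v \in I1 -> e v y ->
  special v y = defective v && (y \in mono_pair v).
Proof.
move=> vI1 evy; have yI0 : y \notin I1 by rewrite -(edge_I1 evy).
by rewrite /special (contraNF (@defective_I1 y) yI0) orbF.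
Qed.

Lemma special_I0 u y : u \notin I1 ->
  special u y = defective y && (u \in mono_pair y).
Proof. by move=> uI0; rewrite /special (contraNF (@defective_I1 u) uI0). Qed.

Lemma hdeg_split x : hdeg e H x =
  (nheavy x + #|[set y | e x y && special x y && ([set x; y] \in H)]|)%N.
Proof.
rewrite /hdeg /nheavy -(cardsID [set y | special x y]) addnC.
by congr (_ + _)%N; apply: eq_card => y; rewrite !inE;
  case: (e x y); case: (special x y); rewrite ?andbT ?andbF.
Qed.

Lemma special_nbrs_I1 v : v \in I1 ->
  [set y | e v y && special v y] = if defective v then mono_pair v else set0.
Proof.
move=> vI1; apply/setP => y; rewrite inE.
have [evy|evy] := boolP (e v y).
  by rewrite special_I1 //; case: (defective v); rewrite ?inE.
case: ifP; rewrite ?inE // => _.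
have [y1 [y2 [-> ey1 ey2 _ _]]] := mono_pairP vI1.
by apply/esym/negbTE; apply: contraNN evy; rewrite !inE => /orP[]/eqP->.
Qed.

Lemma nspecial_I1 v : v \in I1 -> nspecial v = if defective v then 2 else 0.
Proof.
move=> vI1; rewrite /nspecial special_nbrs_I1 //.
case: ifP => _; last exact: cards0.
by have [y1 [y2 [-> _ _ y12 _]]] := mono_pairP vI1; rewrite cards2 y12.
Qed.

Lemma odd_nheavy_I1 v : v \in I1 -> odd (nheavy v) = ~~ defective v.
Proof.
move=> vI1; have -> : ~~ defective v = odd (hdeg e H v).
  by rewrite /defective vI1 addbT negbK.
rewrite hdeg_split oddD.
have -> : [set y | e v y && special v y && ([set v; y] \in H)] =
          [set y in [set y | e v y && special v y] | [set v; y] \in H].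
  by apply/setP => y; rewrite !inE.
rewrite special_nbrs_I1 //; case: ifP => _; last first.
  rewrite (_ : [set y in set0 | _] = set0) ?cards0 ?addbF //.
  by apply/setP => y; rewrite !inE.
have [y1 [y2 [-> _ _ y12 same]]] := mono_pairP vI1.
have := even_card_pair_sep (P := fun y => [set v; y] \in H) y12 same.
by move/negbTE->; rewrite addbF.
Qed.

Lemma nspecial_I0_le1 u : u \notin I1 -> (nspecial u <= 1)%N.
Proof.
move=> uI0; rewrite leqNgt; apply/negP => /card_gt1P [y1 [y2 [+ + y12]]].
rewrite !inE !special_I0 // => /and3P[euy1 dy1 _] /and3P[euy2 dy2 _].
apply: (negP y12); apply/eqP.
by apply: (@defective_apart _ _ u dy1 dy2); rewrite e_sym.
Qed.

Lemma nheavy_I0 u : u \notin I1 -> nspecial u = 0%N -> ~~ odd (nheavy u).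
Proof.
move=> uI0 nsp0.
have : (#|[set y | e u y && special u y && ([set u; y] \in H)]| <= nspecial u)%N.
  by apply/subset_leq_card/subsetP => y; rewrite !inE => /andP[].
rewrite nsp0 leqn0 => /eqP spH0.
have := contraNN (@defective_I1 u) uI0.
by rewrite /defective (negbTE uI0) addbF hdeg_split spH0 addn0.
Qed.

Lemma nspecial_I0_special u v :
  u \notin I1 -> e u v -> special u v -> nspecial u = 1%N.
Proof.
move=> uI0 euv suv; apply/eqP; rewrite eqn_leq nspecial_I0_le1 //=.
by apply/card_gt0P; exists v; rewrite inE euv.
Qed.

Lemma nspecial_I0_nonspecial u v :
  u \notin I1 -> e u v -> defective v -> ~~ special u v -> nspecial u = 0%N.
Proof.
move=> uI0 euv dv nsuv; apply/eqP; rewrite cards_eq0; apply/eqP/setP => y.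
rewrite !inE; apply/negbTE/andP => -[euy suy].
have dy : defective y by move: suy; rewrite special_I0 // => /andP[].
have yv : y = v by apply: (@defective_apart _ _ u dy dv); rewrite e_sym.
by move: nsuv; rewrite -yv suy.
Qed.

Variables (R : realDomainType) (d1 d2 : R).
Hypotheses (d1_gt0 : 0 < d1) (d12 : d1 < d2).

Definition weight (x y : T) : R :=
  if special x y then - d1 else if [set x; y] \in H then d2 else 0.

Lemma weightC x y : weight x y = weight y x.
Proof. by rewrite /weight /special orbC setUC. Qed.

Lemma weight_values x y :
  (weight x y == - d1) || (weight x y == 0) || (weight x y == d2).
Proof.
by rewrite /weight; case: (special x y); last case: ([set x; y] \in H);
  rewrite eqxx /= ?orbT.
Qed.

Lemma wdeg_weight x : wdeg e weight x = d2 *+ nheavy x - d1 *+ nspecial x.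
Proof.
rewrite /wdeg (bigID (special x)) /=.
rewrite (eq_bigr (fun _ => - d1)) => [|y /andP[_ sxy]]; last by rewrite /weight sxy.
rewrite (eq_bigr (fun y => if [set x; y] \in H then d2 else 0)); last first.
  by move=> y /andP[_ /negbTE sxy]; rewrite /weight sxy.
rewrite -big_mkcondr !sumr_const mulNrn addrC /nheavy /nspecial.
by congr (_ *+ _ - _ *+ _); apply: eq_card => y; rewrite inE.
Qed.

Lemma wdeg_weight_neq u v :
  u \notin I1 -> e u v -> wdeg e weight u != wdeg e weight v.
Proof.
move=> uI0 euv; have vI1 : v \in I1 by apply/negPn; rewrite -(edge_I1 euv).
rewrite !wdeg_weight; apply/eqP => E.
have bu_le1 := nspecial_I0_le1 uI0.
have [dv|dv] := boolP (defective v).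
- have bv : nspecial v = 2 by rewrite nspecial_I1 // dv.
  have av : ~~ odd (nheavy v) by rewrite odd_nheavy_I1 // dv.
  have [suv|nsuv] := boolP (special u v).
    have := eq_natmul_comb d1_gt0 d12 _ E.
    by rewrite (nspecial_I0_special uI0 euv suv) bv => /(_ isT) [[]|[]].
  have bu := nspecial_I0_nonspecial uI0 euv dv nsuv.
  have := eq_natmul_comb d1_gt0 d12 _ E; rewrite bu bv => /(_ isT) [[_ //]|[av' _]].
  by move: av (nheavy_I0 uI0 bu); rewrite av' /= negbK => ->.
- have bv : nspecial v = 0 by rewrite nspecial_I1 // (negbTE dv).
  have av : odd (nheavy v) by rewrite odd_nheavy_I1.
  have := eq_natmul_comb d1_gt0 d12 _ (esym E); rewrite bv.
  case=> [|[au bu]|[_ bu]]; first by rewrite /= (leq_trans bu_le1).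
    by move: av (nheavy_I0 uI0 bu); rewrite au => ->.
  by move: bu_le1; rewrite bu.
Qed.

End SparseDefectWeighting.

Theorem lemma2p3 (T : finType) (e : rel T) (I0 I1 : {set T})
    (R : realFieldType) (d1 d2 : R) :
  simple_graph e ->
  bipartition e I0 I1 ->
  (forall v, v \in I1 -> (3 <= deg e v)%N) ->
  0 < d1 -> d1 < d2 ->
  exists w : T -> T -> R,
    edge_weighting e (fun x : R => (x == - d1) || (x == 0) || (x == d2)) w /\
    proper_weighting e w.
Proof.
move=> [e_sym e_irr] bip deg_I1 d1_gt0 d12.
have edge_I1 := bipartition_edge bip.
have [H [defective_I1 defective_apart]] := exists_sparse_defects e_sym e_irr edge_I1.
exists (weight e I1 H d1 d2); split.
  by split=> [x y|x y _]; [exact: weightC | exact: weight_values].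
move=> u v euv; have [uI1|uI0] := boolP (u \in I1).
  rewrite eq_sym; apply: wdeg_weight_neq => //; last by rewrite e_sym.
  by rewrite -(edge_I1 _ _ euv).
exact: wdeg_weight_neq.
Qed.
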